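(* Let $\mathcal{X}$ be any set and $\mathcal{H}\subseteq\{0,1\}^{\mathcal{X}}$. (i) If $\mathcal{H}$ does not have an infinite Littlestone tree, then there is a strategy for the learner in the online learning game that makes only finitely many mistakes against any adversary. (ii) If $\mathcal{H}$ has an infinite Littlestone tree, then there is a strategy for the adversary that forces any learner to make a mistake in every round. In particular, $\mathcal{H}$ is online learnable if and only if it has no infinite Littlestone tree.
   Context: Online learning game: in each round $t\ge1$, the adversary chooses $x_t\in\mathcal{X}$, the learner predicts $\hat y_t\in\{0,1\}$, and the adversary reveals $y_t\in\{0,1\}$, subject to the constraint that for every $T$ there is $h\in\mathcal{H}$ with $h(x_t)=y_t$ for all $t\le T$ (the sequence is realizable). The learner makes a mistake in round $t$ if $\hat y_t\ne y_t$. A learner strategy is a rule $\hat y_t=\hat y_t(x_1,y_1,\ldots,x_{t-1},y_{t-1},x_t)$. $\mathcal{H}$ is online learnable if some learner strategy makes only finitely many mistakes on every realizable sequence $\{(x_t,y_t)\}_{t\ge1}$. Littlestone tree of depth $d\le\infty$: a collection $\{x_{\mathbf u}:0\le k<d,\ \mathbf u\in\{0,1\}^k\}\subseteq\mathcal{X}$ such that for every $\mathbf y\in\{0,1\}^d$ and every $n<d$ there is $h\in\mathcal{H}$ with $h(x_{\mathbf y_{\le k}})=y_{k+1}$ for $0\le k\le n$, where $\mathbf y_{\le k}=(y_1,\ldots,y_k)$. Infinite Littlestone tree: depth $d=\infty$. *)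

From Stdlib Require Import List Arith.
Import ListNotations.

(* A history is the chronological list of revealed pairs (x_1,y_1),...,(x_{t-1},y_{t-1}). *)
Definition history (X : Type) := list (X * bool).

Definition learner (X : Type) := history X -> X -> bool.

(* Rounds are indexed from 0: round t uses xs t, ys t. *)
Definition prefix {X : Type} (xs : nat -> X) (ys : nat -> bool) (t : nat) : history X :=
  map (fun i => (xs i, ys i)) (seq 0 t).

Definition realizable {X : Type} (H : (X -> bool) -> Prop)
  (xs : nat -> X) (ys : nat -> bool) : Prop :=
  forall T : nat, exists h, H h /\ forall t, t < T -> h (xs t) = ys t.

Definition mistake {X : Type} (L : learner X) (xs : nat -> X) (ys : nat -> bool) (t : nat) : Prop :=
  L (prefix xs ys t) (xs t) <> ys t.

Definition finitely_many_mistakes {X : Type} (L : learner X)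
  (xs : nat -> X) (ys : nat -> bool) : Prop :=
  exists N, forall t, N <= t -> ~ mistake L xs ys t.

Definition online_learnable {X : Type} (H : (X -> bool) -> Prop) : Prop :=
  exists L : learner X, forall xs ys, realizable H xs ys -> finitely_many_mistakes L xs ys.

(* Infinite Littlestone tree: nodes x_u indexed by finite bit strings u;
   for every infinite path y and every n there is h in H with
   h (x_{y_{<=k}}) = y_{k+1} for all 0 <= k <= n.  With 0-indexed y,
   y_{<=k} = [y 0; ...; y (k-1)] and y_{k+1} = y k. *)
Definition bits_prefix (y : nat -> bool) (k : nat) : list bool := map y (seq 0 k).

Definition is_inf_littlestone_tree {X : Type} (H : (X -> bool) -> Prop)
  (tree : list bool -> X) : Prop :=
  forall (y : nat -> bool) (n : nat),
    exists h, H h /\ forall k, k <= n -> h (tree (bits_prefix y k)) = y k.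

Definition has_inf_littlestone_tree {X : Type} (H : (X -> bool) -> Prop) : Prop :=
  exists tree : list bool -> X, is_inf_littlestone_tree H tree.

(* An adversary strategy: chooses x_t from the history, and y_t after seeing
   x_t and the learner's prediction yhat_t. *)
Record adversary (X : Type) := Adversary {
  adv_x : history X -> X;
  adv_y : history X -> X -> bool -> bool
}.
Arguments adv_x {X}.
Arguments adv_y {X}.

Fixpoint play_hist {X : Type} (L : learner X) (A : adversary X) (t : nat) : history X :=
  match t with
  | O => []
  | S t' =>
      let h := play_hist L A t' in
      let x := adv_x A h in
      h ++ [(x, adv_y A h x (L h x))]
  end.

Definition play_x {X : Type} (L : learner X) (A : adversary X) (t : nat) : X :=
  adv_x A (play_hist L A t).

Definition play_y {X : Type} (L : learner X) (A : adversary X) (t : nat) : bool :=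
  let h := play_hist L A t in adv_y A h (adv_x A h) (L h (adv_x A h)).

From Stdlib Require Import List Arith Wf_nat Lia.
From Stdlib Require Import Classical ClassicalEpsilon.
Import ListNotations.

(* The online game is a Gale-Stewart game and its two halves are
   handled by a well-founded "winning certificate" for the learner.  A
   certificate for a version space V is either a proof that V is empty, or a
   labelling c : X -> bool together with certificates for every restricted
   space {h in V | h x = c x}.  Given a certificate for H, the learner predicts
   the opposite of c x and descends into the subcertificate only when it errs;
   every mistake is therefore a step down a well-founded tree, and the empty
   leaves are never reached on a realizable sequence, so mistakes stop.
   Conversely, if H has no certificate then at every uncertifiable V some x
   leaves both restrictions uncertifiable (and hence nonempty); choosing such
   an x along every bit string yields an infinite Littlestone tree.  For (ii) the adversary walks down the tree, always answering the
   opposite of the prediction; realizability is the defining property of the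
   tree. *)

Lemma prefix_succ {X : Type} (xs : nat -> X) (ys : nat -> bool) (t : nat) :
  prefix xs ys (S t) = prefix xs ys t ++ [(xs t, ys t)].
Proof. unfold prefix. rewrite seq_S, map_app. reflexivity. Qed.

Lemma bits_prefix_succ (y : nat -> bool) (k : nat) :
  bits_prefix y (S k) = bits_prefix y k ++ [y k].
Proof. unfold bits_prefix. rewrite seq_S, map_app. reflexivity. Qed.

Lemma labels_of_prefix {X : Type} (xs : nat -> X) (ys : nat -> bool) (t : nat) :
  map snd (prefix xs ys t) = bits_prefix ys t.
Proof. unfold prefix, bits_prefix. rewrite map_map. reflexivity. Qed.

Definition restrict {X : Type} (V : (X -> bool) -> Prop) (x : X) (b : bool)
  : (X -> bool) -> Prop :=
  fun h => V h /\ h x = b.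

(* A well-founded certificate that the learner wins the mistake game on V:
   in [wins_split V c _], c x is the answer that makes the learner err at x. *)
Inductive learner_wins {X : Type} : ((X -> bool) -> Prop) -> Type :=
| wins_empty : forall V, (forall h, ~ V h) -> learner_wins V
| wins_split : forall V (c : X -> bool),
    (forall x, learner_wins (restrict V x (c x))) -> learner_wins V.

Definition cert_state (X : Type) := {V : (X -> bool) -> Prop & learner_wins V}.

Definition update {X : Type} (s : cert_state X) (p : X * bool) : cert_state X :=
  match s with
  | existT _ V (wins_split _ c f) =>
      if Bool.eqb (snd p) (c (fst p)) then existT _ _ (f (fst p)) else s
  | _ => s
  end.

Definition predict {X : Type} (s : cert_state X) (x : X) : bool :=
  match projT2 s with
  | wins_empty _ _ => false
  | wins_split _ c _ => negb (c x)
  end.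

Definition certificate_learner {X : Type} (s0 : cert_state X) : learner X :=
  fun hist x => predict (fold_left update hist s0) x.

Definition state_at {X : Type} (s0 : cert_state X) (xs : nat -> X) (ys : nat -> bool)
  (t : nat) : cert_state X :=
  fold_left update (prefix xs ys t) s0.

Lemma state_at_succ {X : Type} (s0 : cert_state X) xs ys t :
  state_at s0 xs ys (S t) = update (state_at s0 xs ys t) (xs t, ys t).
Proof. unfold state_at. rewrite prefix_succ, fold_left_app. reflexivity. Qed.

Section CertificateLearner.
Variables (X : Type) (H : (X -> bool) -> Prop) (w0 : learner_wins H).
Variables (xs : nat -> X) (ys : nat -> bool).

Let s0 : cert_state X := existT _ H w0.
Let L : learner X := certificate_learner s0.

Lemma state_keeps_consistent t h :
  H h -> (forall i, i < t -> h (xs i) = ys i) -> projT1 (state_at s0 xs ys t) h.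
Proof.
  induction t as [|t IH]; intros Hh Hcons; [exact Hh|].
  assert (Hold : projT1 (state_at s0 xs ys t) h) by (apply IH; auto).
  rewrite state_at_succ.
  destruct (state_at s0 xs ys t) as [V [V' e | V' c f]]; simpl in *; [exact Hold|].
  destruct (Bool.eqb (ys t) (c (xs t))) eqn:E; simpl; [|exact Hold].
  split; [exact Hold|]. rewrite Hcons by lia. exact (Bool.eqb_prop _ _ E).
Qed.

Lemma state_never_empty t V e :
  realizable H xs ys -> state_at s0 xs ys t <> existT _ V (wins_empty V e).
Proof.
  intros Hr Et. destruct (Hr t) as [h [Hh Hcons]].
  pose proof (state_keeps_consistent t h Hh Hcons) as Hin.
  rewrite Et in Hin. exact (e h Hin).
Qed.

Section AtSplit.
Variables (V : (X -> bool) -> Prop) (c : X -> bool).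
Variable (f : forall x, learner_wins (restrict V x (c x))).

Lemma mistake_descends t :
  state_at s0 xs ys t = existT _ V (wins_split V c f) -> mistake L xs ys t ->
  state_at s0 xs ys (S t) = existT _ _ (f (xs t)).
Proof.
  intros Et M. unfold mistake, L, certificate_learner in M.
  fold (state_at s0 xs ys t) in M. rewrite Et in M. unfold predict in M; simpl in M.
  assert (Hy : ys t = c (xs t)) by (destruct (ys t), (c (xs t)); simpl in *; congruence).
  rewrite state_at_succ, Et. simpl. rewrite Hy, Bool.eqb_reflx. reflexivity.
Qed.

Lemma state_constant_until_mistake s d :
  state_at s0 xs ys s = existT _ V (wins_split V c f) ->
  (forall i, s <= i < s + d -> ~ mistake L xs ys i) ->
  state_at s0 xs ys (s + d) = existT _ V (wins_split V c f).
Proof.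
  intros Es. induction d as [|d IH]; intros Hnm; [rewrite Nat.add_0_r; exact Es|].
  assert (Ed : state_at s0 xs ys (s + d) = existT _ V (wins_split V c f))
    by (apply IH; intros i Hi; apply Hnm; lia).
  assert (M : ~ mistake L xs ys (s + d)) by (apply Hnm; lia).
  unfold mistake, L, certificate_learner in M.
  fold (state_at s0 xs ys (s + d)) in M. rewrite Ed in M. unfold predict in M; simpl in M.
  assert (Hy : Bool.eqb (ys (s + d)) (c (xs (s + d))) = false)
    by (destruct (ys (s + d)), (c (xs (s + d))); simpl in *; try reflexivity;
        exfalso; apply M; discriminate).
  rewrite Nat.add_succ_r, state_at_succ, Ed. simpl. rewrite Hy. reflexivity.
Qed.

End AtSplit.

(* From any round whose state carries a certificate, mistakes eventually stop:
   induction on the certificate, descending at the first later mistake. *)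
Lemma mistakes_stop_from V (w : learner_wins V) :
  realizable H xs ys -> forall s, state_at s0 xs ys s = existT _ V w ->
  finitely_many_mistakes L xs ys.
Proof.
  intros Hr. induction w as [V e | V c f IH]; intros s Es.
  { exfalso. exact (state_never_empty s V e Hr Es). }
  destruct (classic (exists t, s <= t /\ mistake L xs ys t)) as [Hex | Hnone].
  2: { exists s. intros t Ht M. apply Hnone. exists t. auto. }
  destruct (dec_inh_nat_subset_has_unique_least_element _ (fun n => classic _) Hex)
    as [t [[[Hst Mt] Hleast] _]].
  assert (Et : state_at s0 xs ys t = existT _ V (wins_split V c f)).
  { replace t with (s + (t - s)) by lia.
    apply state_constant_until_mistake; [exact Es|].
    intros i Hi Mi. specialize (Hleast i (conj (proj1 Hi) Mi)). lia. }
  exact (IH (xs t) (S t) (mistake_descends V c f t Et Mt)).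
Qed.

Lemma certificate_learner_succeeds :
  realizable H xs ys -> finitely_many_mistakes L xs ys.
Proof. intro Hr. exact (mistakes_stop_from H w0 Hr 0 eq_refl). Qed.

End CertificateLearner.

Definition uncertifiable {X : Type} (V : (X -> bool) -> Prop) : Prop :=
  ~ inhabited (learner_wins V).

Lemma uncertifiable_nonempty {X : Type} (V : (X -> bool) -> Prop) :
  uncertifiable V -> exists h, V h.
Proof.
  intro NV. apply NNPP. intro Hempty. apply NV. constructor. apply wins_empty.
  intros h Hh. apply Hempty. exists h. exact Hh.
Qed.

(* If every x had a certifiable restriction, choosing one for each x would
   assemble a certificate for V via [wins_split]. *)
Lemma uncertifiable_split {X : Type} (V : (X -> bool) -> Prop) :
  uncertifiable V -> exists x, forall b, uncertifiable (restrict V x b).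
Proof.
  intro NV. apply NNPP. intro Hno. apply NV.
  assert (Hsome : forall x, exists p : {b : bool & learner_wins (restrict V x b)}, True).
  { intro x. apply NNPP. intro Hx. apply Hno. exists x. intros b [wb]. apply Hx.
    exists (existT _ b wb). exact I. }
  pose (choice x := proj1_sig (constructive_indefinite_description _ (Hsome x))).
  constructor. exact (wins_split V (fun x => projT1 (choice x)) (fun x => projT2 (choice x))).
Qed.

Section TreeConstruction.
Variables (X : Type) (pick : ((X -> bool) -> Prop) -> X).

Definition descend (u : list bool) (V : (X -> bool) -> Prop) : (X -> bool) -> Prop :=
  fold_left (fun W b => restrict W (pick W) b) u V.

Lemma descend_uncertifiable :
  (forall W, uncertifiable W -> forall b, uncertifiable (restrict W (pick W) b)) ->
  forall u V, uncertifiable V -> uncertifiable (descend u V).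
Proof.
  intro Hpick. induction u as [|b u IH]; intros V NV; [exact NV|].
  apply IH, Hpick, NV.
Qed.

Lemma descend_labels_path (V : (X -> bool) -> Prop) (y : nat -> bool) :
  forall n h, descend (bits_prefix y n) V h ->
  V h /\ forall k, k < n -> h (pick (descend (bits_prefix y k) V)) = y k.
Proof.
  induction n as [|n IH]; intros h Hh.
  { split; [exact Hh | intros; lia]. }
  unfold descend in Hh. rewrite bits_prefix_succ, fold_left_app in Hh.
  destruct Hh as [Hh Hlast]. destruct (IH h Hh) as [HV Hpath].
  split; [exact HV|]. intros k Hk.
  destruct (Nat.eq_dec k n) as [-> | Hne]; [exact Hlast | apply Hpath; lia].
Qed.

End TreeConstruction.

Lemma tree_of_uncertifiable {X : Type} (H : (X -> bool) -> Prop) :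
  uncertifiable H -> has_inf_littlestone_tree H.
Proof.
  intro NH. destruct (uncertifiable_split H NH) as [x0 _].
  pose (pick W := epsilon (inhabits x0) (fun x => forall b, uncertifiable (restrict W x b))).
  assert (Hpick : forall W, uncertifiable W -> forall b, uncertifiable (restrict W (pick W) b)).
  { intros W NW. exact (epsilon_spec _ _ (uncertifiable_split W NW)). }
  exists (fun u => pick (descend X pick u H)). intros y n.
  destruct (uncertifiable_nonempty _
              (descend_uncertifiable X pick Hpick (bits_prefix y (S n)) H NH)) as [h Hh].
  destruct (descend_labels_path X pick H y (S n) h Hh) as [HH Hpath].
  exists h. split; [exact HH|]. intros k Hk. apply Hpath. lia.
Qed.

Theorem learner_without_tree {X : Type} (H : (X -> bool) -> Prop) :
  ~ has_inf_littlestone_tree H ->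
  exists L : learner X, forall xs ys, realizable H xs ys -> finitely_many_mistakes L xs ys.
Proof.
  intro NT. destruct (classic (inhabited (learner_wins H))) as [[w0] | NH].
  - exists (certificate_learner (existT _ H w0)). intros xs ys.
    exact (certificate_learner_succeeds X H w0 xs ys).
  - exfalso. exact (NT (tree_of_uncertifiable H NH)).
Qed.

Definition tree_adversary {X : Type} (tree : list bool -> X) : adversary X :=
  Adversary X (fun hist => tree (map snd hist)) (fun _ _ yhat => negb yhat).

Lemma play_hist_prefix {X : Type} (L : learner X) (A : adversary X) t :
  play_hist L A t = prefix (play_x L A) (play_y L A) t.
Proof.
  induction t as [|t IH]; [reflexivity|].
  rewrite prefix_succ, <- IH. reflexivity.
Qed.

Theorem adversary_with_tree {X : Type} (H : (X -> bool) -> Prop) :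
  has_inf_littlestone_tree H ->
  exists A : adversary X, forall L : learner X,
    realizable H (play_x L A) (play_y L A) /\ forall t, mistake L (play_x L A) (play_y L A) t.
Proof.
  intros [tree Htree]. exists (tree_adversary tree). intro L. split.
  - intro T. destruct (Htree (play_y L (tree_adversary tree)) T) as [h [Hh Hpath]].
    exists h. split; [exact Hh|]. intros t Ht.
    rewrite <- Hpath by lia. unfold play_x. simpl.
    rewrite play_hist_prefix, labels_of_prefix. reflexivity.
  - intro t. unfold mistake. rewrite <- play_hist_prefix.
    unfold play_y, play_x. simpl. destruct (L _ _); discriminate.
Qed.

Theorem mainTheorem3 :
  forall (X : Type) (H : (X -> bool) -> Prop),
    (* (i) *)
    (~ has_inf_littlestone_tree H ->
       exists L : learner X,
         forall xs ys, realizable H xs ys -> finitely_many_mistakes L xs ys)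
    (* (ii) *)
    /\ (has_inf_littlestone_tree H ->
          exists A : adversary X,
            forall L : learner X,
              realizable H (play_x L A) (play_y L A)
              /\ forall t, mistake L (play_x L A) (play_y L A) t)
    (* in particular *)
    /\ (online_learnable H <-> ~ has_inf_littlestone_tree H).
Proof.
  intros X H.
  split; [exact (learner_without_tree H)|].
  split; [exact (adversary_with_tree H)|].
  split.
  - intros [L HL] Htree. destruct (adversary_with_tree H Htree) as [A HA].
    destruct (HA L) as [Hreal Hall]. destruct (HL _ _ Hreal) as [N HN].
    exact (HN N (le_n N) (Hall N)).
  - exact (learner_without_tree H).
Qed.
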